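(* Let $(V,\mathcal{F})$ be a set system which is the split graph vertex shelling antimatroid of some split graph with vertex set $V$, and suppose $\mathcal{F}\neq 2^V$. Then there is a unique graph $G=(V,E)$ which is a split graph and whose split graph vertex shelling antimatroid is $(V,\mathcal{F})$.
   Context: A split graph is a finite simple graph whose vertex set can be partitioned into a clique $K$ and an independent set $I$. A vertex is simplicial if its neighbours induce a clique. The split graph vertex shelling antimatroid of a split graph $G$ on $V$ is $(V,\mathcal{F})$ where $F\subseteq V$ is feasible iff there is an ordering $f_1,\dots,f_{|F|}$ of $F$ such that each $f_j$ is simplicial in $G$ minus $\{f_1,\dots,f_{j-1}\}$ (the empty set is feasible); this family does not depend on the choice of the partition. $2^V$ denotes the family of all subsets of $V$. *)

From mathcomp Require Import all_boot.
Set Implicit Arguments. Unset Strict Implicit. Unset Printing Implicit Defensive.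

Definition is_graph (V : finType) (e : rel V) : Prop :=
  irreflexive e /\ symmetric e.

Definition is_split (V : finType) (e : rel V) : Prop :=
  exists K : {set V},
    (forall x y, x \in K -> y \in K -> x != y -> e x y) /\
    (forall x y, x \notin K -> y \notin K -> ~~ e x y).

Definition simplicial_in (V : finType) (e : rel V) (S : {set V}) (v : V) : Prop :=
  v \notin S /\
  (forall x y, x \notin S -> y \notin S -> e v x -> e v y -> x != y -> e x y).

(* X is feasible: there is an ordering f_1,...,f_k of X (a duplicate-free
   sequence with underlying set X) such that each f_j is simplicial in
   e minus {f_1,...,f_{j-1}}. *)
Definition feasible (V : finType) (e : rel V) (X : {set V}) : Prop :=
  exists s : seq V,
    [/\ uniq s, [set x in s] = X &
        forall (s1 s2 : seq V) (x : V), s = s1 ++ x :: s2 ->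
          simplicial_in e [set y in s1] x].

Definition is_shelling (V : finType) (e : rel V) (F : {set {set V}}) : Prop :=
  forall X : {set V}, X \in F <-> feasible e X.

From mathcomp Require Import all_boot.
From Stdlib Require Import Classical.
Set Implicit Arguments. Unset Strict Implicit. Unset Printing Implicit Defensive.

(* For a feasible set S, a vertex v is simplicial in G - S iff v |: S is
   feasible, so two graphs with the same shelling family agree on simpliciality
   relative to feasible sets.  In particular they have the same set A of
   simplicial vertices, every subset of A is feasible, and the vertices outside A
   lie in the clique of every split partition, hence span a clique in both
   graphs.  The remaining edges, from a vertex outside A to A and inside A, are
   recovered by deleting suitable subsets of A (and of V) and comparing whether a
   vertex outside A is simplicial in the two graphs; F <> 2^V guarantees such a
   vertex exists, which is what the edges inside A need. *)

Lemma eq_cat_cons_cat (T : eqType) (s t s1 s2 : seq T) (x : T) :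
  s ++ t = s1 ++ x :: s2 ->
  (exists u, s = s1 ++ x :: u) \/ (exists t1, s1 = s ++ t1 /\ t = t1 ++ x :: s2).
Proof.
elim: s s1 => [|a s IH] s1 /=; first by right; exists s1.
case: s1 => [|b s1] /= [<-]; first by left; exists s.
by case/IH => [[u ->]|[t1 [-> ->]]]; [left; exists u | right; exists t1].
Qed.

Section Shelling.

Variables (V : finType) (e : rel V).
Implicit Types (S T : {set V}) (s t : seq V) (v x : V).

Definition simplicial_inb S v : bool :=
  (v \notin S) &&
  [forall x, forall y,
     [&& x \notin S, y \notin S, e v x, e v y & x != y] ==> e x y].

Lemma simplicial_inP S v : reflect (simplicial_in e S v) (simplicial_inb S v).
Proof.
apply: (iffP andP) => -[vS H]; split=> //.
  move=> x y xS yS evx evy xy.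
  by move/forallP/(_ x)/forallP/(_ y): H; rewrite xS yS evx evy xy.
apply/forallP=> x; apply/forallP=> y; apply/implyP.
by case/and5P; apply: H.
Qed.

Definition simplicial_vertices : {set V} := [set v | simplicial_inb set0 v].

Lemma mem_simplicial_vertices v :
  v \in simplicial_vertices <-> simplicial_in e set0 v.
Proof. by rewrite inE; split=> /simplicial_inP. Qed.

Lemma simplicial_in_subset S T v :
  simplicial_in e S v -> S \subset T -> v \notin T -> simplicial_in e T v.
Proof.
move=> [_ H] /subsetP sST vT; split=> // x y xT yT; apply: H.
  by apply: contra xT; apply: sST.
by apply: contra yT; apply: sST.
Qed.

Lemma simplicial_in_setD1 S v b :
  simplicial_in e S v -> ~~ e v b -> simplicial_in e (S :\ b) v.
Proof.
move=> [vS H] nevb; split=> [|x y]; first by rewrite !inE negb_and vS orbT.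
rewrite !inE !negb_and !negbK => /orP[/eqP-> | xS] /orP[/eqP-> | yS] evx evy;
  by [rewrite evx in nevb | rewrite evy in nevb | apply: H].
Qed.

Definition shelling_seq (s : seq V) : Prop :=
  forall s1 s2 x, s = s1 ++ x :: s2 -> simplicial_in e [set y in s1] x.

Lemma shelling_seq_cat s t :
  shelling_seq s -> uniq (s ++ t) ->
  {in t, forall x, simplicial_in e [set y in s] x} -> shelling_seq (s ++ t).
Proof.
move=> shs ust sht s1 s2 x /[dup] Est /eq_cat_cons_cat [[u Es]|[t1 [-> Et]]].
  exact: shs Es.
have xt : x \in t by rewrite Et mem_cat mem_head orbT.
apply: simplicial_in_subset (sht x xt) _ _.
  by apply/subsetP=> y; rewrite !inE mem_cat => ->.
move: ust; rewrite Et catA cat_uniq => /and3P[_ /norP[+ _] _].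
by rewrite inE.
Qed.

Lemma feasible_setU S T :
  feasible e S -> {in T, forall x, simplicial_in e S x} -> feasible e (S :|: T).
Proof.
move=> [s [us <- shs]] simT.
have ust : uniq (s ++ enum T).
  rewrite cat_uniq us enum_uniq andbT; apply/hasPn=> x; rewrite mem_enum.
  by case/simT; rewrite inE.
exists (s ++ enum T); split=> //.
  by apply/setP=> y; rewrite !inE mem_cat mem_enum.
by apply: shelling_seq_cat => // x; rewrite mem_enum; apply: simT.
Qed.

Lemma feasible_set0 : feasible e set0.
Proof. by exists [::]; split=> // -[]. Qed.

Lemma feasible_simplicial_vertices S :
  S \subset simplicial_vertices -> feasible e S.
Proof.
move=> /subsetP sSA; rewrite -[S]set0U; apply: feasible_setU feasible_set0 _.
by move=> x /sSA /mem_simplicial_vertices.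
Qed.

Lemma feasible_setU1_simplicial S v :
  feasible e (v |: S) -> v \notin S -> simplicial_in e S v.
Proof.
move=> [t [ut Et sht]] vS.
have vt : v \in t by rewrite -[_ \in t]in_set Et setU11.
move: ut Et sht; case/splitPr: vt => t1 t2 ut Et sht.
apply: simplicial_in_subset (sht _ _ _ (erefl _)) _ vS.
apply/subsetP=> y; rewrite inE => yt1.
have : y \in v |: S by rewrite -Et inE mem_cat yt1.
rewrite in_setU1 => /predU1P [yv|//].
by move: ut; rewrite cat_uniq /= -yv yt1 andbF.
Qed.

Lemma simplicial_in_feasible S v :
  feasible e S -> simplicial_in e S v <-> v \notin S /\ feasible e (v |: S).
Proof.
move=> fS; split=> [sv|[vS fvS]]; last exact: feasible_setU1_simplicial.
split; first by case: sv.
by rewrite setUC; apply: feasible_setU fS _ => x /set1P ->.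
Qed.

End Shelling.

Lemma simplicial_in_same_feasible (V : finType) (e e' : rel V) (S : {set V}) v :
  (forall X, feasible e X <-> feasible e' X) -> feasible e S ->
  simplicial_in e S v <-> simplicial_in e' S v.
Proof.
move=> EF fS; have fS' := (EF S).1 fS.
split=> [/(simplicial_in_feasible _ fS) [vS /EF fvS] |
         /(simplicial_in_feasible _ fS') [vS /EF fvS]].
  exact/(simplicial_in_feasible _ fS').
exact/(simplicial_in_feasible _ fS).
Qed.

Section SplitGraph.

Variables (V : finType) (e : rel V).
Implicit Types (S K L : {set V}) (v : V).

Definition clique K :=
  forall x y, x \in K -> y \in K -> x != y -> e x y.

Definition stable_compl K := forall x y, x \notin K -> y \notin K -> ~~ e x y.

Lemma cliqueS K L : L \subset K -> clique K -> clique L.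
Proof. by move=> /subsetP sLK CK x y /sLK xK /sLK yK; apply: CK. Qed.

Lemma simplicial_in_clique_nbrs S v K :
  v \notin S -> (forall x, x \notin S -> e v x -> x \in K) -> clique K ->
  simplicial_in e S v.
Proof.
move=> vS nbrK CK; split=> // x y xS yS evx evy.
by apply: CK; [apply: nbrK xS evx | apply: nbrK yS evy].
Qed.

Lemma clique_setU1 K k :
  symmetric e -> clique K -> (forall y, y \in K -> y != k -> e k y) ->
  clique (k |: K).
Proof.
move=> sym CK ekK x y; rewrite !in_setU1.
move=> /predU1P[->|xK] /predU1P[->|yK]; rewrite ?eqxx // => xy.
- by apply: ekK; rewrite // eq_sym.
- by rewrite sym; apply: ekK.
- exact: CK.
Qed.

Lemma simplicial_in_compl K S v :
  clique K -> stable_compl K -> v \notin K -> v \notin S -> simplicial_in e S v.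
Proof.
move=> CK SK vK vS; apply: simplicial_in_clique_nbrs vS _ CK => x _ evx.
by apply: contraLR evx; apply: SK.
Qed.

Lemma nonsimplicial_pair v :
  ~ simplicial_in e set0 v -> exists p q, [/\ e v p, e v q, p != q & ~~ e p q].
Proof.
move=> nsv; apply: NNPP => npair; apply: nsv; split; first by rewrite inE.
move=> x y _ _ evx evy xy; apply: NNPP => /negP nexy; apply: npair.
by exists x, y.
Qed.

Lemma nonsimplicial_nbr_compl K v :
  clique K -> ~ simplicial_in e set0 v -> exists2 i, i \notin K & e v i.
Proof.
move=> CK /nonsimplicial_pair [p [q [evp evq pq nepq]]].
have [pK|] := boolP (p \in K); last by exists p.
have [qK|] := boolP (q \in K); last by exists q.
by rewrite CK in nepq.
Qed.

Lemma split_max_clique :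
  symmetric e -> is_split e ->
  exists K, [/\ clique K, stable_compl K &
                forall i, i \notin K -> exists2 k, k \in K & ~~ e i k].
Proof.
move=> sym [K0 [C0 S0]].
have [n] := ubnP #|~: K0|; elim: n K0 C0 S0 => // n IH K CK SK ltKn.
have [/existsP[i /andP[iK /forall_inP eiK]] | /existsPn maxK] :=
  boolP [exists i, (i \notin K) && [forall k in K, e i k]].
  apply: (IH (i |: K)).
  - apply: clique_setU1 => // y yK _; exact: eiK.
  - by move=> x y; rewrite !in_setU1 !negb_or => /andP[_ xK] /andP[_ yK]; apply: SK.
  rewrite -ltnS; apply: leq_trans ltKn; rewrite ltnS; apply: proper_card.
  by rewrite properC properE subsetUr subUset sub1set (negbTE iK).
exists K; split=> // i iK.
by move: (maxK i); rewrite iK negb_forall_in => /exists_inP.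
Qed.

End SplitGraph.

Section EdgeSubrelation.

Variables (V : finType) (e e' : rel V).
Hypotheses (irr_e : irreflexive e) (sym_e : symmetric e) (sym_e' : symmetric e').
Hypothesis same_feasible : forall X, feasible e X <-> feasible e' X.
Variables (K K' : {set V}) (n0 : V).
Hypotheses (cliqueK : clique e K) (stableK : stable_compl e K).
Hypothesis maxK : forall i, i \notin K -> exists2 k, k \in K & ~~ e i k.
Hypotheses (cliqueK' : clique e' K') (stableK' : stable_compl e' K').
Hypothesis n0_nonsimplicial : ~ simplicial_in e set0 n0.

Local Notation A := (simplicial_vertices e).

Let transfer S v : feasible e S ->
  simplicial_in e S v <-> simplicial_in e' S v.
Proof. exact: simplicial_in_same_feasible. Qed.

Let feasibleDA (B : {set V}) : feasible e (A :\: B).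
Proof. exact/feasible_simplicial_vertices/subsetDl. Qed.

Let notin_DA (B : {set V}) v : v \notin A -> v \notin A :\: B.
Proof. exact/contra/subsetP/subsetDl. Qed.

Lemma notA_in_K v : v \notin A -> v \in K.
Proof.
apply: contraR => vK; apply/mem_simplicial_vertices.
by apply: simplicial_in_compl cliqueK stableK vK _; rewrite inE.
Qed.

Lemma notA_in_K' v : v \notin A -> v \in K'.
Proof.
apply: contraR => vK'; apply/mem_simplicial_vertices/transfer.
  exact: feasible_set0.
by apply: simplicial_in_compl cliqueK' stableK' vK' _; rewrite inE.
Qed.

Lemma clique_notA : clique e (~: A).
Proof.
by apply: cliqueS cliqueK; apply/subsetP=> v; rewrite in_setC; apply: notA_in_K.
Qed.

Lemma clique_notA' : clique e' (~: A).
Proof.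
by apply: cliqueS cliqueK'; apply/subsetP=> v; rewrite in_setC; apply: notA_in_K'.
Qed.

Lemma simplicial_K_nonadj k i : k \in K -> k \in A -> i \notin K -> ~~ e k i.
Proof.
move=> kK /mem_simplicial_vertices [_ simpk] iK; apply/negP=> eki.
have [k' k'K nik'] := maxK iK.
have kk' : k != k' by apply: contraNneq nik' => <-; rewrite sym_e.
have ik' : i != k' by apply: contraNneq iK => ->.
by move: nik'; rewrite (simpk i k') ?inE // cliqueK.
Qed.

Lemma simplicial_adj_in_K a b : a \in A -> b \in A -> e a b -> a \in K.
Proof.
move=> aA bA eab; apply: contraT => aK.
have [bK|bK] := boolP (b \in K).
  by move: (simplicial_K_nonadj bK bA aK); rewrite sym_e eab.
by move: (stableK aK bK); rewrite eab.
Qed.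

(* Without the edge [n b] in [e'], the [e']-neighbours of [n] outside [A :\ b]
   are non-simplicial, so [n] is simplicial in [e'] minus [A :\ b], hence in [e]. *)
Lemma lost_edge_adj_notA n b :
  n \notin A -> b \in A -> e n b -> ~~ e' n b -> forall m, m \notin A -> e m b.
Proof.
move=> nA bA enb nenb m mA.
have [->|mn] := eqVneq m n; first exact: enb.
have /(transfer _ (feasibleDA _)) [_ simpn] : simplicial_in e' (A :\ b) n.
  apply: simplicial_in_clique_nbrs clique_notA'; first exact: notin_DA.
  move=> x; rewrite in_setD1 negb_and negbK in_setC => /orP[/eqP-> | //].
  by rewrite (negbTE nenb).
apply: simpn; rewrite ?setD11 ?notin_DA //.
  by apply: clique_notA; rewrite ?in_setC // eq_sym.
by apply: contraNneq mA => ->.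
Qed.

Lemma lost_edge_adj_A n b k :
  n \notin A -> b \in A -> e n b -> ~~ e' n b -> k \in A -> k != b ->
  (forall m, m \notin A -> e m k) -> e b k.
Proof.
move=> nA bA enb nenb kA kb ek; apply: contraT => nebk.
have simpn : simplicial_in e (A :\ k) n.
  apply: (@simplicial_in_clique_nbrs _ _ _ _ (k |: ~: A)).
  - exact: notin_DA.
  - by move=> x; rewrite in_setD1 negb_and negbK in_setU1 in_setC.
  apply: clique_setU1 sym_e clique_notA _ => y; rewrite in_setC => yA _.
  by rewrite sym_e; apply: ek.
have /(transfer _ (feasibleDA _)) [_ simpn'] :
    simplicial_in e' (A :\: ([set k] :|: [set b])) n.
  by rewrite -setDDl; apply: simplicial_in_setD1 nenb; apply/transfer.
move: nebk; rewrite (simpn' b k) ?in_setD ?in_setU ?in_set1 ?eqxx ?orbT //.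
  exact: ek.
by rewrite eq_sym.
Qed.

Lemma edge_notA_A_notK n b : n \notin A -> b \in A -> b \notin K -> e n b -> e' n b.
Proof.
move=> nA bA bK enb; apply: contraT => nenb.
have [k kK nebk] := maxK bK.
have kA : k \in A.
  apply: contraT => kA; move: nebk; rewrite sym_e.
  by rewrite (lost_edge_adj_notA nA bA enb nenb kA).
have kb : k != b by apply: contraNneq bK => <-.
move: nebk; rewrite (lost_edge_adj_A nA bA enb nenb kA kb) //.
move=> m mA; apply: cliqueK (notA_in_K mA) kK _.
by apply: contraNneq mA => ->.
Qed.

Lemma feasible_nonnbrs i b :
  b \in K -> feasible e ((A :\: [set i; b]) :|: [set x | (x \notin A) && ~~ e x i]).
Proof.
move=> bK; apply: feasible_setU (feasibleDA _) _ => x; rewrite in_set.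
case/andP=> xA nexi; apply: simplicial_in_clique_nbrs cliqueK.
  exact: notin_DA.
move=> y; rewrite in_setD in_set2 negb_and negbK.
case/orP=> [/orP[]/eqP-> // exi | yA _]; first by rewrite exi in nexi.
exact: notA_in_K.
Qed.

Lemma edge_notA_A n b : n \notin A -> b \in A -> e n b -> e' n b.
Proof.
move=> nA bA enb; have [bK|bK] := boolP (b \in K); last exact: edge_notA_A_notK.
apply: contraT => nenb.
have [i iK eni] : exists2 i, i \notin K & e n i.
  apply: nonsimplicial_nbr_compl cliqueK _ => /mem_simplicial_vertices.
  exact/negP.
have iA : i \in A by apply: contraR iK; apply: notA_in_K.
have neib : ~~ e i b by rewrite sym_e; apply: simplicial_K_nonadj.
have ib : i != b by apply: contraNneq iK => ->.
(* Outside [S], [n] sees the non-adjacent [i] and [b] in [e], but only [i] and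
   the clique [M] in [e'], so [n] is simplicial in [e'] minus [S] only. *)
pose M := [set m | (m \notin A) && e m i].
pose S := (A :\: [set i; b]) :|: [set x | (x \notin A) && ~~ e x i].
have fS : feasible e S := feasible_nonnbrs i bK.
have AS x : x \in A -> x \notin S -> (x == i) || (x == b).
  move=> xA; rewrite in_setU in_setD xA andbT negb_or negbK.
  by case/andP; rewrite in_set2.
have notAS x : x \notin A -> x \notin S -> x \in M.
  move=> xA; rewrite in_setU in_setD (negbTE xA) andbF /= in_set xA /= negbK.
  by move=> exi; rewrite in_set xA exi.
have [_ simpn] : simplicial_in e S n.
  apply/(transfer _ fS); apply: (@simplicial_in_clique_nbrs _ _ _ _ (i |: M)).
  - by rewrite in_setU negb_or notin_DA // in_set nA eni.
  - move=> x xS enx; rewrite in_setU1; have [xA|xA] := boolP (x \in A).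
      move: enx; case/orP: (AS x xA xS) => /eqP-> e'nx; first by rewrite eqxx.
      by rewrite e'nx in nenb.
    by rewrite (notAS x xA xS) orbT.
  apply: clique_setU1 sym_e' _ _.
    apply: cliqueS clique_notA'; apply/subsetP=> m.
    by rewrite in_set in_setC => /andP[].
  move=> m; rewrite in_set => /andP[mA emi] _; rewrite sym_e'.
  exact: edge_notA_A_notK.
have iS : i \notin S by rewrite in_setU in_setD in_set2 eqxx in_set iA.
have bS : b \notin S by rewrite in_setU in_setD in_set2 eqxx orbT in_set bA.
by rewrite (simpn i b) in neib.
Qed.

Lemma edge_A_A a b : a \in A -> b \in A -> e a b -> e' a b.
Proof.
move=> aA bA eab.
have aK := simplicial_adj_in_K aA bA eab.
have bK : b \in K by apply: simplicial_adj_in_K bA aA _; rewrite sym_e.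
have n0A : n0 \notin A by apply/negP => /mem_simplicial_vertices.
have e'n0 x : x \in A -> x \in K -> e' n0 x.
  move=> xA xK; apply: edge_notA_A => //.
  by apply: cliqueK (notA_in_K n0A) xK _; apply: contraNneq n0A => ->.
have /(transfer _ (feasibleDA _)) [_ simpn0] :
    simplicial_in e (A :\: [set a; b]) n0.
  apply: simplicial_in_clique_nbrs cliqueK; first exact: notin_DA.
  move=> y; rewrite in_setD in_set2 negb_and negbK.
  by case/orP=> [/orP[]/eqP-> // | yA _]; apply: notA_in_K.
apply: simpn0; rewrite ?in_setD ?in_set2 ?eqxx ?orbT ?e'n0 //.
by apply: contraTneq eab => ->; rewrite irr_e.
Qed.

Lemma edge_subrel : subrel e e'.
Proof.
move=> a b eab; have [aA|aA] := boolP (a \in A); have [bA|bA] := boolP (b \in A).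
- exact: edge_A_A.
- by rewrite sym_e'; apply: edge_notA_A; rewrite // sym_e.
- exact: edge_notA_A.
apply: cliqueK' (notA_in_K' aA) (notA_in_K' bA) _.
by apply: contraTneq eab => ->; rewrite irr_e.
Qed.

End EdgeSubrelation.

Lemma split_shelling_subrel (V : finType) (e e' : rel V) :
  is_graph e -> is_split e -> symmetric e' -> is_split e' ->
  (forall X, feasible e X <-> feasible e' X) ->
  (exists v, ~ simplicial_in e set0 v) -> subrel e e'.
Proof.
move=> [irr sym] split_e sym' [K' [CK' SK']] EF [n0 nsn0].
have [K [CK SK maxK]] := split_max_clique sym split_e.
exact: (edge_subrel irr sym sym' EF CK SK maxK CK' SK' nsn0).
Qed.

Lemma nonsimplicial_of_shelling (V : finType) (e : rel V) (F : {set {set V}}) :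
  is_shelling e F -> F != [set: {set V}] -> exists v, ~ simplicial_in e set0 v.
Proof.
move=> she /negP FT; apply: NNPP => allsimp; apply/FT/eqP/setP=> X; rewrite inE.
apply/she/feasible_simplicial_vertices/subsetP=> v _.
by apply/mem_simplicial_vertices; apply: NNPP => nsv; apply: allsimp; exists v.
Qed.

Theorem mainTheorem5 (V : finType) (F : {set {set V}}) :
  (exists e : rel V, [/\ is_graph e, is_split e & is_shelling e F]) ->
  F != [set: {set V}] ->
  exists e : rel V,
    [/\ is_graph e, is_split e & is_shelling e F] /\
    (forall e' : rel V,
        is_graph e' -> is_split e' -> is_shelling e' F -> e' =2 e).
Proof.
move=> [e [ge se she]] FT; exists e; split=> // e' ge' se' she'.
have EF X : feasible e X <-> feasible e' X.
  by split=> [/she/she' | /she'/she].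
have [v nsv] := nonsimplicial_of_shelling she FT.
have nsv' : ~ simplicial_in e' set0 v.
  by move/(simplicial_in_same_feasible _ EF (feasible_set0 e)).
have EF' X : feasible e' X <-> feasible e X by split=> /EF.
move=> x y; apply/idP/idP.
  by apply: (split_shelling_subrel ge' se' (proj2 ge) se EF'); exists v.
by apply: (split_shelling_subrel ge se (proj2 ge') se' EF); exists v.
Qed.
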